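(* Let $\mathcal{M}$ be a set of models, $c:\mathcal{M}\to(0,\infty)$ a cost function, $\mathcal{S}$ a step neighborhood function and $m_0\in\mathcal{M}$ a base model, as described in the context. Assume that $c(\cdot)$ is bounded, i.e. there is $c_{\max}\in\mathbb{R}$ with $0<c(m)\le c_{\max}$ for all $m\in\mathcal{M}$. (a) Let $m^+,m^-\in\mathcal{M}$ with $\mathcal{P}(m^+)\neq\emptyset$, and suppose that either $\mathcal{L}_{\mathrm{complexity}}(m^+)<\mathcal{L}_{\mathrm{complexity}}(m^-)$, or $\mathcal{L}_{\mathrm{complexity}}(m^+)=\mathcal{L}_{\mathrm{complexity}}(m^-)$ and $c(m^+)<c(m^-)$. Then $$\lim_{\gamma\to+\infty}\big(\mathcal{L}_\gamma(m^-)-\mathcal{L}_\gamma(m^+)\big)=+\infty.$$ (b) Let $\bm{m}^+,\bm{m}^-\in\mathcal{P}$ be interpretable paths with $\bm{c}(\bm{m}^+)\preceq\bm{c}(\bm{m}^-)$, where $\preceq$ is the lexicographic order on $\mathbb{R}^{\mathbb{N}}$. Then $$\lim_{\gamma\to 0}\big(\mathcal{L}_\gamma(\bm{m}^-)-\mathcal{L}_\gamma(\bm{m}^+)\big)\ge 0.$$ Consequently, given models $m^+,m^-\in\mathcal{M}$, if there exists $\bm{m}^+\in\mathcal{P}(m^+)$ such that $\bm{c}(\bm{m}^+)\preceq\bm{c}(\bm{m}^-)$ for all $\bm{m}^-\in\mathcal{P}(m^-)$, then $$\lim_{\gamma\to 0}\big(\mathcal{L}_\gamma(m^-)-\mathcal{L}_\gamma(m^+)\big)\ge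 0.$$
   Context: Setting: $\mathcal{M}$ is a set (of models), $c:\mathcal{M}\to(0,\infty)$ is a cost function, and $\mathcal{S}:\mathcal{M}\to 2^{\mathcal{M}}$ is a step neighborhood function with $\mathcal{S}(m)\neq\emptyset$ for all $m$; $m'$ is ''one interpretable step from $m$'' iff $m'\in\mathcal{S}(m)$. A fixed base model $m_0\in\mathcal{M}$ is given. An interpretable path of length $K\ge 0$ is a sequence $\bm{m}=(m_1,\dots,m_K)$ of models with $m_k\in\mathcal{S}(m_{k-1})$ for $1\le k\le K$ (starting from $m_0$); its length is $|\bm{m}|=K$, and its final model is $m_K$ (the final model of the length-$0$ path is $m_0$). $\mathcal{P}_K$ is the set of paths of length $K$, $\mathcal{P}=\bigcup_{K\ge0}\mathcal{P}_K$, $\mathcal{P}_K(m)=\{\bm{m}\in\mathcal{P}_K: m_K=m\}$ and $\mathcal{P}(m)=\bigcup_{K\ge0}\mathcal{P}_K(m)$. The model complexity is $\mathcal{L}_{\mathrm{complexity}}(m)=\min_{\bm{m}\in\mathcal{P}(m)}|\bm{m}|$ (equal to $\infty$ if $\mathcal{P}(m)=\emptyset$). The cost sequence of a path $\bm{m}\in\mathcal{P}_K$ is the infinite sequence $\bm{c}(\bm{m})=(c_1,c_2,\dots)$ with $c_k=c(m_k)$ for $k\le K$ and $c_k=0$ for $k>K$. For $\gamma>0$, the path interpretability loss is $\mathcal{L}_\gamma(\bm{m})=\sum_{k=1}^{|\bm{m}|}\gamma^k c(m_k)$, and the model interpretability loss is $\mathcal{L}_\gamma(m)=\infty$ if $\mathcal{P}(m)=\emptyset$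 and $\mathcal{L}_\gamma(m)=\inf_{\bm{m}\in\mathcal{P}(m)}\mathcal{L}_\gamma(\bm{m})$ otherwise. *)

From HB Require Import structures.
From mathcomp Require Import all_boot all_order all_algebra.
From mathcomp Require Import all_classical all_reals all_analysis.
Set Implicit Arguments. Unset Strict Implicit. Unset Printing Implicit Defensive.
Import Order.TTheory GRing.Theory Num.Theory.
Local Open Scope classical_set_scope.
Local Open Scope ring_scope.

Section Interp.
Variables (M : Type) (S : M -> set M) (m0 : M).

Fixpoint is_ipath_from (prev : M) (s : seq M) : Prop :=
  match s with
  | [::] => True
  | x :: s' => S prev x /\ is_ipath_from x s'
  end.

Definition ipaths : set (seq M) := [set s | is_ipath_from m0 s].

Definition final_model (s : seq M) : M := last m0 s.

Definition ipaths_to (m : M) : set (seq M) :=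
  [set s | ipaths s /\ final_model s = m].

Variable R : realType.

Definition complexity (m : M) : \bar R :=
  ereal_inf [set ((size s)%:R)%:E | s in ipaths_to m].

Variable c : M -> R.

(* cost sequence, 0-indexed: cost_seq s n = c_(n+1) *)
Definition cost_seq (s : seq M) : nat -> R :=
  fun n => if (n < size s)%N then c (nth m0 s n) else 0.

Definition path_loss (gamma : R) (s : seq M) : R :=
  \sum_(k < size s) gamma ^+ k.+1 * c (nth m0 s k).

Definition model_loss (gamma : R) (m : M) : \bar R :=
  ereal_inf [set (path_loss gamma s)%:E | s in ipaths_to m].

End Interp.

Definition lex_le (R : realType) (u v : nat -> R) : Prop :=
  u = v \/ exists n, (forall i, (i < n)%N -> u i = v i) /\ u n < v n.

From HB Require Import structures.
From mathcomp Require Import all_boot all_order all_algebra.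
From mathcomp Require Import all_classical all_reals all_analysis.
From mathcomp Require Import ring.
Import Order.TTheory GRing.Theory Num.Theory.
Import numFieldNormedType.Exports.
Local Open Scope classical_set_scope.
Local Open Scope ring_scope.

Set Implicit Arguments.
Unset Strict Implicit.

(** As [gamma -> +oo] the loss of a path of length [K] is dominated by its
   last term [gamma^K c(m_K)], so the model loss grows like [gamma^K] times
   the cost of the model, with [K] its complexity: a model of smaller
   complexity, or of equal complexity and smaller cost, eventually has a
   smaller loss by an unbounded margin.  As [gamma -> 0+] the loss of every
   fixed path tends to [0]; hence the difference of two path losses tends to
   [0], and the difference of two model losses, each squeezed between [0] and
   a path loss, tends to [0] too (or is [+oo] when [m-] is unreachable). *)

Lemma pow_mul_affine_cvgy {R : realFieldType} n (B : R) {d : R} : 0 < d ->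
  (fun g => g ^+ n * (g * d - B)) @ +oo --> +oo.
Proof.
move=> d_gt0; apply/cvgryPge => A.
near=> g.
have g_ge1 : 1 <= g by near: g; apply: nbhs_pinfty_ge; exact: num_real.
have A_le : Num.max A 0 <= g * d - B.
  rewrite lerBrDl -(ler_pdivrMr _ _ d_gt0).
  by near: g; apply: nbhs_pinfty_ge; exact: num_real.
apply: le_trans (_ : g * d - B <= _).
  by apply: le_trans A_le; rewrite le_max lexx.
apply: ler_peMl; last exact: exprn_ege1.
by apply: le_trans A_le; rewrite le_max lexx orbT.
Unshelve. all: by end_near.
Qed.

Section InterpretabilityLoss.
Variables (R : realType) (M : Type) (S : M -> set M) (m0 : M) (c : M -> R).

Lemma path_loss_rcons g s x :
  path_loss m0 c g (rcons s x) = path_loss m0 c g s + g ^+ (size s).+1 * c x.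
Proof.
rewrite /path_loss size_rcons big_ord_recr /= nth_rcons ltnn eqxx.
by congr (_ + _); apply: eq_bigr => k _; rewrite nth_rcons ltn_ord.
Qed.

Lemma path_loss_cvg0 s : (fun g => path_loss m0 c g s) @ 0^'+ --> 0.
Proof.
rewrite [X in _ --> X](_ : 0 = \sum_(k < size s) 0 ^+ k.+1 * c (nth m0 s k)).
  apply: cvg_big => [|k _]; first exact: add_continuous.
  apply: cvgM; last exact: cvg_cst.
  by apply: cvg_at_right_filter; exact: exprn_continuous.
by rewrite big1 // => k _; rewrite expr0n mul0r.
Qed.

Lemma final_model_rcons s x : final_model m0 (rcons s x) = x.
Proof. exact: last_rcons. Qed.

Lemma complexity_le m s :
  ipaths_to S m0 m s -> (complexity S m0 R m <= (size s)%:R%:E)%E.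
Proof. by move=> ms; apply: ereal_inf_lbound; exists s. Qed.

Lemma complexity_attained m : ipaths_to S m0 m !=set0 ->
  exists2 s, ipaths_to S m0 m s & complexity S m0 R m = (size s)%:R%:E.
Proof.
case=> s ms.
have ex_size : exists n, `[< exists2 s, ipaths_to S m0 m s & size s = n >].
  by exists (size s); apply/asboolP; exists s.
case: (ex_minnP ex_size) => n /asboolP[sp msp <-] size_min.
exists sp => //; apply/le_anti; rewrite complexity_le //=.
apply: le_ereal_inf_tmp => _ [s' ms' <-]; rewrite lee_fin ler_nat.
by apply: size_min; apply/asboolP; exists s'.
Qed.

Lemma model_loss_le g m s :
  ipaths_to S m0 m s -> (model_loss S m0 c g m <= (path_loss m0 c g s)%:E)%E.
Proof. by move=> ms; apply: ereal_inf_lbound; exists s. Qed.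

Lemma model_loss_ge g m r :
  (forall s, ipaths_to S m0 m s -> r <= path_loss m0 c g s) ->
  (r%:E <= model_loss S m0 c g m)%E.
Proof. by move=> r_le; apply: le_ereal_inf_tmp => _ [s ms <-]; exact: r_le. Qed.

Lemma model_loss_set0 g m :
  ipaths_to S m0 m = set0 -> model_loss S m0 c g m = +oo%E.
Proof. by move=> P0; rewrite /model_loss P0 image_set0 ereal_inf0. Qed.

Lemma model_loss_sub_set0 mp mm sp :
  ipaths_to S m0 mp sp -> ipaths_to S m0 mm = set0 ->
  (fun g => model_loss S m0 c g mm - model_loss S m0 c g mp)%E = cst +oo%E.
Proof.
move=> msp P0; apply/funext => g; rewrite model_loss_set0 //=.
have := le_lt_trans (model_loss_le g msp) (ltry _).
by case: (model_loss S m0 c g mp).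
Qed.

Hypothesis c_gt0 : forall m, 0 < c m.

Lemma path_loss_ge0 g s : 0 <= g -> 0 <= path_loss m0 c g s.
Proof.
move=> g_ge0; apply: sumr_ge0 => k _.
by apply: mulr_ge0; [exact: exprn_ge0 | exact: ltW].
Qed.

Lemma path_loss_rcons_ge {g} s x :
  0 <= g -> g ^+ (size s).+1 * c x <= path_loss m0 c g (rcons s x).
Proof. by move=> g_ge0; rewrite path_loss_rcons lerDr path_loss_ge0. Qed.

Lemma model_loss_ge0 g m : 0 <= g -> (0 <= model_loss S m0 c g m)%E.
Proof. by move=> g_ge0; apply: model_loss_ge => s _; exact: path_loss_ge0. Qed.

(* The loss of [mm] is at least [g^(n+1) c(mm)], which exceeds the assumed
   bound on the loss of [mp] by [g^n (g (c(mm) - a) - B)]. *)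
Lemma model_loss_sub_cvgy mp mm n a B :
  (forall s, ipaths_to S m0 mm s -> (n < size s)%N) -> a < c mm ->
  (forall g, 1 <= g ->
     (model_loss S m0 c g mp <= (g ^+ n.+1 * a + B * g ^+ n)%:E)%E) ->
  (fun g => model_loss S m0 c g mm - model_loss S m0 c g mp)%E @ +oo --> +oo%E.
Proof.
move=> size_gt a_lt mp_le.
have d_gt0 : 0 < c mm - a by rewrite subr_gt0.
have /cvgeryP := pow_mul_affine_cvgy n B d_gt0; apply: gee_cvgy.
near=> g.
have g_ge1 : 1 <= g by near: g; apply: nbhs_pinfty_ge; exact: num_real.
have mm_ge : ((g ^+ n.+1 * c mm)%:E <= model_loss S m0 c g mm)%E.
  apply: model_loss_ge => s ms; have := size_gt s ms; case: ms => _ <-.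
  case/lastP: s => [//|s x]; rewrite size_rcons ltnS final_model_rcons => n_le.
  apply: le_trans (path_loss_rcons_ge s x (le_trans ler01 g_ge1)).
  by apply: ler_wpM2r; [exact: ltW | exact: ler_weXn2l].
apply: le_trans (leeB mm_ge (mp_le g g_ge1)).
by rewrite -EFinB lee_fin [leRHS](_ : _ = g ^+ n * (g * (c mm - a) - B)) // exprS; ring.
Unshelve. all: by end_near.
Qed.

Lemma path_loss_sub_cvg0 sp sm :
  (fun g => path_loss m0 c g sm - path_loss m0 c g sp) @ 0^'+ --> 0.
Proof. by rewrite -[X in _ --> X](subr0 0); apply: cvgB; exact: path_loss_cvg0. Qed.

Lemma model_loss_sub_cvg0 mp mm sp sm :
  ipaths_to S m0 mp sp -> ipaths_to S m0 mm sm ->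
  (fun g => model_loss S m0 c g mm - model_loss S m0 c g mp)%E @ 0^'+ --> 0%E.
Proof.
move=> msp msm.
apply: (@squeeze_cvge _ _ _ _ (fun g => (- path_loss m0 c g sp)%:E) _
                              (fun g => (path_loss m0 c g sm)%:E)).
- near=> g.
  have g_ge0 : 0 <= g by apply: ltW; near: g; exact: nbhs_right_gt.
  rewrite EFinN; apply/andP; split.
    by rewrite -[leLHS]add0e; apply: leeB; [exact: model_loss_ge0 | exact: model_loss_le].
  by rewrite -[leRHS]sube0; apply: leeB; [exact: model_loss_le | exact: model_loss_ge0].
- apply: cvg_EFin; first by near=> g.
  by rewrite -[X in _ --> X]oppr0; apply: cvgN; exact: path_loss_cvg0.
- apply: cvg_EFin; first by near=> g.
  exact: path_loss_cvg0.
Unshelve. all: by end_near.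
Qed.

Variable cmax : R.
Hypothesis c_le : forall m, c m <= cmax.

Lemma path_loss_le_pow g s :
  1 <= g -> path_loss m0 c g s <= (size s)%:R * cmax * g ^+ size s.
Proof.
move=> g_ge1; apply: le_trans (_ : \sum_(k < size s) cmax * g ^+ size s <= _).
  apply: ler_sum => k _; rewrite mulrC.
  apply: ler_pM; [exact: ltW | exact: exprn_ge0 (le_trans ler01 g_ge1) | exact: c_le |].
  exact: (ler_weXn2l g_ge1 (ltn_ord k)).
by rewrite sumr_const card_ord -mulrA mulr_natl.
Qed.

Lemma model_loss_sub_cvgy_complexity_lt mp mm sp :
  ipaths_to S m0 mp sp -> complexity S m0 R mp = (size sp)%:R%:E ->
  (complexity S m0 R mp < complexity S m0 R mm)%E ->
  (fun g => model_loss S m0 c g mm - model_loss S m0 c g mp)%E @ +oo --> +oo%E.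
Proof.
move=> msp cp_eq cp_lt.
apply: (@model_loss_sub_cvgy mp mm (size sp) 0 ((size sp)%:R * cmax)).
- move=> s ms; have := lt_le_trans cp_lt (complexity_le ms).
  by rewrite cp_eq lte_fin ltr_nat.
- exact: c_gt0.
- move=> g g_ge1; apply: le_trans (model_loss_le g msp) _.
  by rewrite lee_fin mulr0 add0r path_loss_le_pow.
Qed.

Lemma model_loss_sub_cvgy_complexity_eq mp mm sp :
  ipaths_to S m0 mp sp -> complexity S m0 R mp = (size sp)%:R%:E ->
  complexity S m0 R mp = complexity S m0 R mm -> c mp < c mm ->
  (fun g => model_loss S m0 c g mm - model_loss S m0 c g mp)%E @ +oo --> +oo%E.
Proof.
move=> msp cp_eq cp_mm c_lt.
have size_le s : ipaths_to S m0 mm s -> (size sp <= size s)%N.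
  by move=> ms; have := complexity_le ms; rewrite -cp_mm cp_eq lee_fin ler_nat.
case/lastP: sp msp cp_eq size_le => [|s x] msp _ size_le.
- apply: (@model_loss_sub_cvgy mp mm 0 0 0) => [[|//] [_ mm0] | | g _].
  + by move: c_lt; rewrite -mm0 -(proj2 msp) ltxx.
  + exact: c_gt0.
  + apply: le_trans (model_loss_le g msp) _.
    by rewrite /path_loss big_ord0 mulr0 mul0r addr0.
- have x_eq : x = mp by case: msp => _ <-; rewrite final_model_rcons.
  apply: (@model_loss_sub_cvgy mp mm (size s) (c mp) ((size s)%:R * cmax)) => //.
  + by move=> sm msm; rewrite -(size_rcons s x) size_le.
  + move=> g g_ge1; apply: le_trans (model_loss_le g msp) _.
    by rewrite lee_fin path_loss_rcons x_eq addrC lerD2l path_loss_le_pow.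
Qed.

End InterpretabilityLoss.

Theorem theorem1 (R : realType) (M : Type) (c : M -> R) (S : M -> set M) (m0 : M)
  (c_pos : forall m, 0 < c m)
  (c_bdd : exists cmax : R, forall m, c m <= cmax)
  (S_ne : forall m, S m !=set0) :
  (* (a) *)
  (forall mp mm : M,
     ipaths_to S m0 mp !=set0 ->
     ((complexity S m0 R mp < complexity S m0 R mm)%E \/
      (complexity S m0 R mp = complexity S m0 R mm /\ c mp < c mm)) ->
     (fun g : R => (model_loss S m0 c g mm - model_loss S m0 c g mp)%E)
       @ +oo --> +oo%E)
  /\
  (* (b), paths *)
  (forall sp sm : seq M,
     ipaths S m0 sp -> ipaths S m0 sm ->
     lex_le (cost_seq m0 c sp) (cost_seq m0 c sm) ->
     exists l : R, 0 <= l /\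
       (fun g : R => path_loss m0 c g sm - path_loss m0 c g sp) @ 0^'+ --> l)
  /\
  (* (b), consequence for models *)
  (forall mp mm : M,
     (exists sp, ipaths_to S m0 mp sp /\
        forall sm, ipaths_to S m0 mm sm ->
          lex_le (cost_seq m0 c sp) (cost_seq m0 c sm)) ->
     exists l : \bar R, (0 <= l)%E /\
       (fun g : R => (model_loss S m0 c g mm - model_loss S m0 c g mp)%E)
         @ 0^'+ --> l).
Proof.
have [cmax c_le] := c_bdd.
split; [|split].
- move=> mp mm mp_ne.
  have [sp msp cp_eq] := complexity_attained R mp_ne.
  case=> [cp_lt|[cp_mm c_lt]].
  + exact: (model_loss_sub_cvgy_complexity_lt c_pos c_le msp cp_eq cp_lt).
  + exact: (model_loss_sub_cvgy_complexity_eq c_pos c_le msp cp_eq cp_mm c_lt).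
- move=> sp sm _ _ _; exists 0; split => //.
  exact: path_loss_sub_cvg0.
- move=> mp mm [sp [msp _]].
  have [P0|/set0P[sm msm]] := eqVneq (ipaths_to S m0 mm) set0.
  + exists +oo%E; split; first exact: leey.
    by rewrite (model_loss_sub_set0 c msp P0); exact: cvg_cst.
  + exists 0%E; split => //.
    exact: (model_loss_sub_cvg0 c_pos msp msm).
Qed.
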